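(* Let $n \ge k \ge 1$ be integers, let $s \in (0,1)$, $q = 1-s$ and $r = q/s$. Let $S$ be the (finite) set of states defined in the context, and let $P = (p_{xy})_{x,y \in S}$ be the transition matrix $$p_{xy} = r^{\,b(y)}\,\frac{s^k}{1-q^k}\,q^{\,\phi(|y|-|x|)} .$$ Define weights $\omega_x = r^{\,b(x)}$ for $x \in S$ and the probability vector $\nu_x = \omega_x / \sum_{z \in S} \omega_z$. Then $\nu$ is a stationary distribution of $P$, i.e. $\nu_y = \sum_{x \in S} \nu_x p_{xy}$ for every $y \in S$; moreover it is the unique stationary distribution.
   Context: Model: $k$ workers move in one direction around a closed loop of $n$ bins, never passing one another and never occupying the same bin. In each time step each worker moves bin by bin, performing at each bin an independent Bernoulli trial with success probability $s$, until it either has a success (and stops to collect a part) or is blocked by the worker directly ahead, who has stopped (it then ends one bin behind that worker without a success). States record the forward distances between consecutive workers and which workers were blocked. Formal definitions. Let $1^*$ be a formal symbol and set $|1^*| := 1$ and $|m| := m$ for positive integers $m$. The state space $S$ is the set of $k$-tuples $x = (x_1,\dots,x_k)$ with each $x_i \in \{1^*, 1, 2, \dots, n-k+1\}$, such that $\sum_{i=1}^k |x_i| = n$ and at most $k-1$ entries equal $1^*$. ($x_i$ is the distance from worker $i$ forward to worker $i+1$, indices mod $k$; $x_i = 1^*$ means worker $i$ is blocked.) For $x \in S$, $b(x)$ denotes the number of entries equal to $1^*$, and $|x| := (|x_1|,\dots,|x_k|) \in \mathbb{Z}^k$. For $\Delta = (d_1,\dots,d_k) \in \mathbb{Z}^k$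 with $\sum_i d_i = 0$, put $\gamma_j = \sum_{i=1}^j d_i$ for $j=1,\dots,k$, and $\phi(\Delta) = \sum_{j=1}^k \bigl(\gamma_j - \min_{1 \le i \le k} \gamma_i\bigr)$. ($\phi(\Delta)$ is the total number of Bernoulli failures needed to change the spacing by $\Delta$ when at least one worker moves zero bins after the common advance.) The matrix $P$ is the transition matrix of the warehouse process on $S$. *)

From HB Require Import structures.
From mathcomp Require Import all_boot all_order all_algebra.
Set Implicit Arguments. Unset Strict Implicit. Unset Printing Implicit Defensive.
Import Order.TTheory GRing.Theory Num.Theory.
Local Open Scope ring_scope.

(* An entry of a state: [None] is the formal symbol 1^*, [Some m] is the
   positive integer m (positivity and the bound n-k+1 are imposed in [inS]). *)
Definition entry (n : nat) := option 'I_n.+1.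

Definition eabs (n : nat) (e : entry n) : nat :=
  if e is Some m then nat_of_ord m else 1%N.

(* k-tuples of entries; worker i = index i (0-based) *)
Definition state (n k : nat) := {ffun 'I_k -> entry n}.

Definition bnum (n k : nat) (x : state n k) : nat :=
  #|[pred i : 'I_k | x i == None]|.

Definition inS (n k : nat) (x : state n k) : bool :=
  [&& [forall i : 'I_k, if x i is Some m then (1 <= m <= n - k + 1)%N else true],
      (\sum_(i < k) eabs (x i) == n)%N
    & (bnum x <= k - 1)%N].

Definition absv (n k : nat) (x : state n k) : 'I_k -> int :=
  fun i => (eabs (x i))%:Z.

(* minimum of a list of integers (true minimum for nonempty lists) *)
Definition minlist (l : seq int) : int := foldr Num.min (head 0 l) l.

Definition gamma (k : nat) (d : 'I_k -> int) (j : 'I_k) : int :=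
  \sum_(i < k | (i <= j)%N) d i.

Definition phi (k : nat) (d : 'I_k -> int) : int :=
  \sum_(j < k) (gamma d j - minlist [seq gamma d i | i <- enum 'I_k]).

Definition delta (n k : nat) (x y : state n k) : 'I_k -> int :=
  fun i => absv y i - absv x i.

Definition Ptrans (R : realFieldType) (n k : nat) (s : R) (x y : state n k) : R :=
  let q := 1 - s in let r := q / s in
  r ^+ bnum y * (s ^+ k / (1 - q ^+ k)) * q ^ phi (delta x y).

Definition omega (R : realFieldType) (n k : nat) (s : R) (x : state n k) : R :=
  ((1 - s) / s) ^+ bnum x.

Definition nu (R : realFieldType) (n k : nat) (s : R) (x : state n k) : R :=
  omega s x / \sum_(z : state n k | inS z) omega s z.

From mathcomp Require Import all_boot all_order all_algebra.
From mathcomp Require Import zify ring.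
Import Order.TTheory GRing.Theory Num.Theory.
Set Implicit Arguments. Unset Strict Implicit. Unset Printing Implicit Defensive.
Local Open Scope ring_scope.

(* Fix the target state y.  For a state x, gamma_j - min gamma is the number
   of Bernoulli failures worker j incurs on the way from x to y, so
   phi(|y| - |x|) is their total.  Give each worker an
   independent budget g_j of failures before its first success, with law
   s q^t (truncated far beyond any reachable count).  Call g consistent
   with x when every unblocked worker of x spends exactly its budget and
   every blocked worker has budget left when it is stopped.  Going around
   the ring from a worker with budget 0, g determines its consistent state
   uniquely; a profile without a zero budget is consistent with no state,
   since then every worker would be blocked.  The profiles consistent with
   x carry mass s^k r^b(x) q^phi, so summing over x gives
   s^k sum_x r^b(x) q^phi(|y| - |x|) = 1 - q^k, which is the balance
   equation nu P = nu.  Uniqueness holds because all entries of P are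
   positive. *)

Section CyclicOrdinals.
Variable k : nat.

Lemma iter_ordS_val (j : 'I_k) t : val (iter t (@ordS k) j) = ((j + t) %% k)%N.
Proof.
elim: t => [|t IH] /=; first by rewrite addn0 modn_small.
by rewrite IH -addn1 modnDml addn1 addnS.
Qed.

Lemma iter_ordS_onto (j0 j : 'I_k) : exists2 t, (t < k)%N & iter t (@ordS k) j0 = j.
Proof.
have k_gt0 : (0 < k)%N by case: j => /= m; lia.
exists ((j + (k - j0)) %% k)%N; first by rewrite ltn_mod.
apply: val_inj; rewrite iter_ordS_val /= modnDmr.
have -> : (j0 + (j + (k - j0)) = j + k)%N by have := ltn_ord j0; lia.
by rewrite modnDr modn_small.
Qed.

Lemma ordS_ind (P : 'I_k -> Prop) j0 :
  P j0 -> (forall j, P j -> P (ordS j)) -> forall j, P j.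
Proof.
move=> P0 PS j; have [t _ <-] := iter_ordS_onto j0 j.
by elim: t => //= t IH; apply: PS.
Qed.

Lemma ord_pred_ind (P : 'I_k -> Prop) j0 :
  P j0 -> (forall j, P j -> P (ord_pred j)) -> forall j, P j.
Proof.
move=> P0 PP j; have [t _ e] := iter_ordS_onto j j0; rewrite -e in P0.
elim: t j P0 {e} => [|t IH] j //; rewrite iterSr => /IH /PP.
by rewrite ordSK.
Qed.

Lemma ord_pred_val (j : 'I_k) : (0 < j)%N -> ord_pred j = j.-1 :> nat.
Proof.
move=> j_gt0 /=; have j_lt := ltn_ord j.
have -> : ((j + k).-1 = j.-1 + k)%N by lia.
by rewrite modnDr modn_small //; lia.
Qed.

End CyclicOrdinals.

Lemma ord_pred0 k : ord_pred (ord0 : 'I_k.+1) = ord_max.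
Proof. by apply: val_inj; rewrite /= modn_small. Qed.

Lemma foldr_min_le d (T : orderType d) (h : T) l z :
  z \in h :: l -> (foldr Order.min h l <= z)%O.
Proof.
elim: l => [|a l IH] /=; first by rewrite inE => /eqP ->.
rewrite ge_min !inE => /or3P [zh | /eqP -> | zl]; last 2 first.
- by rewrite lexx.
- by rewrite IH ?orbT // inE zl orbT.
by rewrite IH ?orbT // inE zh.
Qed.

Lemma foldr_min_mem d (T : orderType d) (h : T) l : foldr Order.min h l \in h :: l.
Proof.
elim: l => [|a l IH] /=; first by rewrite inE.
rewrite /Order.min; case: ifP => _; first by rewrite !inE eqxx orbT.
by move: IH; rewrite !inE => /orP [->|->]; rewrite ?orbT.
Qed.

Lemma minlist_le (l : seq int) z : z \in l -> minlist l <= z.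
Proof. by case: l => [|a l] // zl; apply: foldr_min_le; rewrite inE zl orbT. Qed.

Lemma minlist_mem (l : seq int) : l != [::] -> minlist l \in l.
Proof.
case: l => [|a l] // _; change (foldr Num.min a (a :: l) \in a :: l).
by have := foldr_min_mem a (a :: l); rewrite inE => /orP [/eqP ->|]; rewrite ?inE ?eqxx.
Qed.

Section PartialSums.
Variable k : nat.
Implicit Types d : 'I_k.+1 -> int.

Lemma gamma_ord0 d : gamma d ord0 = d ord0.
Proof. by rewrite /gamma (big_pred1 ord0) // => i; rewrite /= leqn0. Qed.

Lemma gamma_ord_max d : gamma d ord_max = \sum_i d i.
Proof. by apply: eq_bigl => i; rewrite leq_ord. Qed.

Lemma gamma_ord_pred d (j : 'I_k.+1) :
  (0 < j)%N -> gamma d j = gamma d (ord_pred j) + d j.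
Proof.
move=> j_gt0; rewrite /gamma ord_pred_val // (bigD1 j) //= addrC; congr (_ + _).
by apply: eq_bigl => i; rewrite -[RHS]ltnS prednK // ltn_neqAle andbC.
Qed.

End PartialSums.

Lemma Posz_sum (I : finType) (P : pred I) (F : I -> nat) :
  (\sum_(i | P i) F i)%N%:Z = \sum_(i | P i) (F i)%:Z.
Proof. exact: (big_morph Posz PoszD). Qed.

Section States.
Variables n k : nat.
Implicit Types x y : state n k.

Lemma inS_sum_eabs x : inS x -> (\sum_i eabs (x i))%N = n.
Proof. by case/and3P => _ /eqP. Qed.

Lemma inS_eabs_gt0 x j : inS x -> (0 < eabs (x j))%N.
Proof. by case/and3P => /forallP /(_ j); case: (x j) => [m|] //= /andP []. Qed.

Lemma inS_eabs_le x j : inS x -> (eabs (x j) <= n)%N.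
Proof.
move=> hx; apply: (@leq_trans (\sum_i eabs (x i))); last by rewrite (inS_sum_eabs hx).
by rewrite (bigD1 j) //= leq_addr.
Qed.

Lemma sum_delta x y : inS x -> inS y -> \sum_i delta x y i = 0.
Proof.
by move=> hx hy; rewrite sumrB -!Posz_sum (inS_sum_eabs hx) (inS_sum_eabs hy) subrr.
Qed.

Lemma gamma_delta_bound x y j : inS x -> inS y -> - n%:Z <= gamma (delta x y) j <= n%:Z.
Proof.
have partial (z : state n k) : inS z -> (\sum_(i : 'I_k | (i <= j)%N) eabs (z i) <= n)%N.
  move=> hz; apply: (@leq_trans (\sum_i eabs (z i))); last by rewrite (inS_sum_eabs hz).
  by rewrite [X in (_ <= X)%N](bigID (fun i : 'I_k => (i <= j)%N)) leq_addr.
move=> hx hy; rewrite /gamma /delta /absv sumrB -!Posz_sum.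
set sx := (\sum_(i | _) eabs (x i))%N; set sy := (\sum_(i | _) eabs (y i))%N.
have : (sx <= n)%N := partial x hx; have : (sy <= n)%N := partial y hy; lia.
Qed.

End States.

Section Failures.
Variables (n k : nat) (y : state n k.+1).
Hypothesis hy : inS y.
Implicit Types x : state n k.+1.

Local Notation gmin x := (minlist [seq gamma (delta x y) i | i <- enum 'I_k.+1]).

Definition failures x j : nat := `|gamma (delta x y) j - gmin x|%N.

Lemma gmin_mem x : exists i, gmin x = gamma (delta x y) i.
Proof.
have /mapP [i _ ->] : gmin x \in [seq gamma (delta x y) i | i <- enum 'I_k.+1].
  by apply: minlist_mem; rewrite -size_eq0 size_map size_enum_ord.
by exists i.
Qed.

Lemma failuresE x j : (failures x j)%:Z = gamma (delta x y) j - gmin x.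
Proof. by rewrite gez0_abs // subr_ge0 minlist_le // map_f ?mem_enum. Qed.

Lemma phi_failures x : phi (delta x y) = (\sum_j failures x j)%N%:Z.
Proof. by rewrite Posz_sum; apply: eq_bigr => j _; rewrite failuresE. Qed.

Lemma failures_zero x : exists j, failures x j = 0%N.
Proof. by have [j hj] := gmin_mem x; exists j; apply/eqP; rewrite -eqz_nat failuresE hj subrr. Qed.

Lemma failures_rec x j : inS x ->
  (failures x j + eabs (x j) = failures x (ord_pred j) + eabs (y j))%N.
Proof.
move=> hx; suff: gamma (delta x y) j = gamma (delta x y) (ord_pred j) + delta x y j.
  by have := failuresE x j; have := failuresE x (ord_pred j); rewrite /delta /absv; lia.
have [j0 | j_gt0] := posnP j; last exact: gamma_ord_pred.
have -> : j = ord0 by apply: val_inj.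
by rewrite ord_pred0 gamma_ord0 gamma_ord_max sum_delta // add0r.
Qed.

Lemma failures_le x j : inS x -> (failures x j <= 2 * n)%N.
Proof.
move=> hx; have [i hi] := gmin_mem x; have := failuresE x j; rewrite hi.
by have := gamma_delta_bound j hx hy; have := gamma_delta_bound i hx hy; lia.
Qed.

Lemma failures_unique x (u : 'I_k.+1 -> nat) : inS x ->
  (forall j, u j + eabs (x j) = u (ord_pred j) + eabs (y j))%N ->
  (exists j, u j = 0%N) -> failures x =1 u.
Proof.
move=> hx hu [j2 u_j2] j; have [j1 f_j1] := failures_zero x.
have shift i : forall i', (failures x i + u i' = failures x i' + u i)%N.
  apply: (ordS_ind (j0 := i)) => [|i' IH]; first lia.
  by have := failures_rec (ordS i') hx; have := hu (ordS i'); rewrite ordSK; lia.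
by have := shift j j1; have := shift j2 j; lia.
Qed.

End Failures.

Section TruncatedGeometric.
Variables (R : comPzRingType) (s : R) (B : nat).

Definition tgeom (t : nat) : R := if (t < B)%N then s * (1 - s) ^+ t else (1 - s) ^+ B.

Lemma sum_tgeom_ge m : (m <= B)%N ->
  \sum_(t : 'I_B.+1 | (m <= t)%N) tgeom t = (1 - s) ^+ m.
Proof.
move=> m_le; have -> : \sum_(t : 'I_B.+1 | (m <= t)%N) tgeom t = \sum_(m <= i < B.+1) tgeom i.
  by rewrite big_geq_mkord; apply: eq_bigl.
rewrite big_nat_recr //= {2}/tgeom ltnn.
rewrite (@telescope_sumr_eq _ _ _ (fun i => - (1 - s) ^+ i)) // => [|i /andP [_ i_lt]].
  by rewrite opprK; ring.
by rewrite /tgeom i_lt exprS; ring.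
Qed.

Lemma sum_prod_tgeom (I : finType) :
  \sum_(g : {ffun I -> 'I_B.+1}) \prod_i tgeom (g i) = 1.
Proof.
rewrite -(bigA_distr_bigA (fun (_ : I) (t : 'I_B.+1) => tgeom t)) big1 // => i _.
by rewrite -(expr0 (1 - s)) -(sum_tgeom_ge (leq0n B)).
Qed.

Lemma sum_prod_tgeom_gt0 (I : finType) : (0 < B)%N ->
  \sum_(g in family (fun _ : I => [pred t : 'I_B.+1 | (0 < t)%N])) \prod_i tgeom (g i)
    = (1 - s) ^+ #|I|.
Proof.
move=> B_gt0; rewrite -(bigA_distr_big_dep _ (fun (_ : I) (t : 'I_B.+1) => tgeom t)).
by rewrite (eq_bigr (fun _ => 1 - s)) ?prodr_const // => i _; rewrite sum_tgeom_ge.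
Qed.

End TruncatedGeometric.

Section Consistency.
Variables (n k B : nat) (y : state n k.+1).
Hypothesis hy : inS y.
Implicit Types (x : state n k.+1) (g : {ffun 'I_k.+1 -> 'I_B.+1}).

(* g j is the budget of worker j.  A blocked worker stops one bin behind its
   leader, after exactly [blocked_failures x j] failures. *)
Definition blocked_failures x j := (failures y x (ord_pred j) + eabs (y j) - 1)%N.

Definition admissible x j : pred 'I_B.+1 :=
  if x j is Some _ then [pred t : 'I_B.+1 | t == failures y x j :> nat]
  else [pred t : 'I_B.+1 | blocked_failures x j < t]%N.

Definition consistent x g := g \in family (admissible x).

Lemma consistent_failures x g j : inS x -> consistent x g ->
  failures y x j = minn (g j) (blocked_failures x j).
Proof.
move=> hx /familyP /(_ j); rewrite /admissible /blocked_failures.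
have := failures_rec hy j hx; have := inS_eabs_gt0 j hx.
by case: (x j) => [m|] /=; rewrite inE; [move=> x_gt0 rec /eqP -> | move=> _ rec]; lia.
Qed.

Lemma consistent_blocked x g j : inS x -> consistent x g ->
  (x j == None) = (blocked_failures x j < g j)%N.
Proof.
move=> hx /familyP /(_ j); rewrite /admissible /blocked_failures.
have := failures_rec hy j hx; have := inS_eabs_gt0 j hx.
case: (x j) => [m|] //= x_gt0 rec; rewrite inE => /eqP ->.
by apply/esym/negbTE; rewrite -leqNgt; lia.
Qed.

Lemma consistent_inj g j0 x x' : g j0 = 0%N :> nat ->
  inS x -> consistent x g -> inS x' -> consistent x' g -> x = x'.
Proof.
move=> g_j0 hx cx hx' cx'.
have same : failures y x =1 failures y x'.
  apply: (ordS_ind (j0 := j0)) => [|j IH].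
    by rewrite (consistent_failures _ hx cx) (consistent_failures _ hx' cx') g_j0 !min0n.
  rewrite (consistent_failures _ hx cx) (consistent_failures _ hx' cx').
  by rewrite /blocked_failures ordSK IH.
apply/ffunP => j; have := consistent_blocked j hx cx; have := consistent_blocked j hx' cx'.
rewrite /blocked_failures !same => <-.
have := failures_rec hy j hx; have := failures_rec hy j hx'; rewrite !same.
case: (x j) => [m|]; case: (x' j) => [m'|] //= rec' rec _.
by congr Some; apply: ord_inj; lia.
Qed.

Lemma consistent_has_zero x g : inS x -> consistent x g -> [exists j, g j == 0%N :> nat].
Proof.
move=> hx cx; apply: contraT; rewrite negb_exists => /forallP g_gt0.
have back j : failures y x j = 0%N -> failures y x (ord_pred j) = 0%N /\ x j = None.
  move=> f0; have := consistent_failures j hx cx; have := consistent_blocked j hx cx.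
  have := g_gt0 j; have := inS_eabs_gt0 j hy; rewrite -lt0n /blocked_failures f0.
  move=> c_gt0 g_pos blocked min0.
  have cap0 : (failures y x (ord_pred j) + eabs (y j) - 1 = 0)%N by lia.
  by split; [lia | apply/eqP; rewrite blocked cap0].
have [j1 f_j1] := failures_zero y x.
have all0 := ord_pred_ind (P := fun j => failures y x j = 0%N) f_j1 (fun j f0 => (back j f0).1).
case/and3P: hx => _ _; rewrite /bnum (eq_card (B := 'I_k.+1)) ?card_ord ?subn1 ?ltnn //.
by move=> i; rewrite !inE (back i (all0 i)).2 eqxx.
Qed.

Section ConsistentState.
Variables (g : {ffun 'I_k.+1 -> 'I_B.+1}) (j0 : 'I_k.+1).
Hypothesis g_j0 : g j0 = 0%N :> nat.

Definition failure_step (u : 'I_k.+1 -> nat) j :=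
  minn (g j) (u (ord_pred j) + eabs (y j) - 1).

Lemma iter_failure_step_indep t u u' i : (i < t)%N ->
  iter t failure_step u (iter i (@ordS _) j0) = iter t failure_step u' (iter i (@ordS _) j0).
Proof.
elim: t u u' i => [|t IH] u u' [|i] //= i_lt; first by rewrite /failure_step g_j0 !min0n.
by rewrite /failure_step ordSK (IH u u' i).
Qed.

(* Worker j0 has budget 0, so one more worker along the ring is settled by
   each round of [failure_step]; after k.+1 rounds all of them are. *)
Definition forced_failures := iter k.+1 failure_step (fun _ => 0%N).

Lemma forced_failuresE j : forced_failures j = failure_step forced_failures j.
Proof.
change (forced_failures j = iter k.+2 failure_step (fun _ => 0%N) j).
by rewrite iterSr; have [t t_lt <-] := iter_ordS_onto j0 j; apply: iter_failure_step_indep.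
Qed.

Local Notation u := forced_failures.

Definition forced_gap j := (u (ord_pred j) + eabs (y j) - u j)%N.

Lemma forced_gap_add j : (forced_gap j + u j = u (ord_pred j) + eabs (y j))%N.
Proof.
have := forced_failuresE j; have := inS_eabs_gt0 j hy.
by rewrite /forced_gap /failure_step; lia.
Qed.

Lemma forced_gap_gt0 j : (0 < forced_gap j)%N.
Proof.
have := forced_failuresE j; have := inS_eabs_gt0 j hy.
by rewrite /forced_gap /failure_step; lia.
Qed.

Lemma sum_forced_gap : (\sum_j forced_gap j = n)%N.
Proof.
have := inS_sum_eabs hy; have : (\sum_j u j = \sum_j u (ord_pred j))%N.
  by rewrite (reindex_inj (@ord_pred_inj _)).
have : (\sum_j (forced_gap j + u j) = \sum_j u (ord_pred j) + \sum_j eabs (y j))%N.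
  by rewrite -big_split; apply: eq_bigr => j _; rewrite forced_gap_add.
rewrite big_split /=; lia.
Qed.

Lemma forced_gap_le j : (forced_gap j + k <= n)%N.
Proof.
rewrite -sum_forced_gap (bigD1 j) //= leq_add2l.
have : (\sum_(i | i != j) 1 <= \sum_(i | i != j) forced_gap i)%N.
  by apply: leq_sum => i _; apply: forced_gap_gt0.
by rewrite sum1_card cardC1 card_ord.
Qed.

Definition forced_state : state n k.+1 :=
  [ffun j => if (u (ord_pred j) + eabs (y j) - 1 < g j)%N then None
             else Some (inord (forced_gap j))].

Lemma eabs_forced_state j : eabs (forced_state j) = forced_gap j.
Proof.
have := forced_failuresE j; have := forced_gap_gt0 j; have := forced_gap_le j.
rewrite /forced_state ffunE /forced_gap /failure_step; case: ifP => blocked /=; first lia.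
move=> le gt0 fixj; rewrite inordK; lia.
Qed.

Lemma inS_forced_state : inS forced_state.
Proof.
apply/and3P; split.
- apply/forallP => j; have := eabs_forced_state j.
  have := forced_gap_gt0 j; have := forced_gap_le j.
  by case: (forced_state j) => [m|] //= *; lia.
- by apply/eqP; rewrite -[RHS]sum_forced_gap; apply/eq_bigr => j _; apply: eabs_forced_state.
- rewrite /bnum; apply: (@leq_trans #|predC1 j0|); last by rewrite cardC1 card_ord subn1.
  apply: subset_leq_card; apply/subsetP => i; rewrite !inE.
  by apply: contraTneq => ->; rewrite /forced_state ffunE g_j0 ltn0.
Qed.

Lemma failures_forced_state : failures y forced_state =1 u.
Proof.
apply: (failures_unique hy inS_forced_state) => [j|]; last first.
  by exists j0; rewrite forced_failuresE /failure_step g_j0 min0n.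
by rewrite eabs_forced_state addnC forced_gap_add.
Qed.

Lemma consistent_forced_state : consistent forced_state g.
Proof.
apply/familyP => j; rewrite /admissible /blocked_failures !failures_forced_state.
have := forced_failuresE j; rewrite /forced_state ffunE /failure_step.
case: ifP => [//| /negbT]; rewrite -leqNgt /= => g_le ->.
by rewrite inE minnC; apply/eqP/esym/minn_idPr.
Qed.

End ConsistentState.

Lemma sum_consistent (V : nmodType) g (v : V) :
  \sum_(x | inS x && consistent x g) v = if [exists j, g j == 0%N :> nat] then v else 0.
Proof.
case: ifP => [/existsP [j0 /eqP g_j0] | no_zero].
  rewrite (big_pred1 (forced_state g)) // => x /=.
  apply/idP/eqP => [/andP [hx cx] | ->].
    have := consistent_forced_state g_j0.
    exact: consistent_inj g_j0 hx cx (inS_forced_state g_j0).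
  by rewrite (inS_forced_state g_j0) (consistent_forced_state g_j0).
rewrite big_pred0 // => x; apply/negbTE/andP => [[hx cx]].
by rewrite (consistent_has_zero hx cx) in no_zero.
Qed.

End Consistency.

Section BalanceIdentity.
Variables (R : fieldType) (s : R) (n k : nat) (y : state n k.+1).
Hypotheses (hy : inS y) (s_neq0 : s != 0).

(* Failure counts are at most 2n and blocked workers use at most 3n - 1. *)
Local Notation B := (3 * n)%N.
Local Notation q := (1 - s).

Lemma sum_admissible x j : inS x ->
  \sum_(t | @admissible n k B y x j t) tgeom s B t =
  s * (if x j == None then q / s else 1) * q ^+ failures y x j.
Proof.
move=> hx; have f_le := failures_le hy j hx.
have c_le := inS_eabs_le j hy; have c_gt0 := inS_eabs_gt0 j hy.
have := failures_rec hy j hx; rewrite /admissible.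
case: (x j) => [m|] /= rec.
- have f_lt : (failures y x j < B.+1)%N by lia.
  rewrite (big_pred1 (Ordinal f_lt)) => [|t]; last by rewrite /= -val_eqE.
  by rewrite /tgeom /= ifT ?mulr1 //; lia.
- rewrite (eq_bigl (fun t : 'I_B.+1 => (blocked_failures y x j).+1 <= t)%N) //.
  rewrite sum_tgeom_ge; last by rewrite /blocked_failures; lia.
  have -> : failures y x j = blocked_failures y x j by rewrite /blocked_failures; lia.
  by rewrite exprS; field.
Qed.

Lemma consistent_weight x : inS x ->
  \sum_(g : {ffun 'I_k.+1 -> 'I_B.+1} | consistent y x g) \prod_j tgeom s B (g j) =
  s ^+ k.+1 * (q / s) ^+ bnum x * q ^+ (\sum_j failures y x j).
Proof.
move=> hx.
rewrite -(bigA_distr_big_dep _ (fun (_ : 'I_k.+1) (t : 'I_B.+1) => tgeom s B t)).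
rewrite (eq_bigr _ (fun j _ => sum_admissible j hx)) !big_split /=.
by rewrite prodr_const card_ord -big_mkcond /= prodr_const prodrXr.
Qed.

Lemma balance_identity :
  s ^+ k.+1 * \sum_(x | inS x) (q / s) ^+ bnum x * q ^+ (\sum_j failures y x j)
    = 1 - q ^+ k.+1.
Proof.
pose W (g : {ffun 'I_k.+1 -> 'I_B.+1}) := \prod_j tgeom s B (g j).
pose pos := fun _ : 'I_k.+1 => [pred t : 'I_B.+1 | (0 < t)%N].
have B_gt0 : (0 < B)%N by have := inS_eabs_gt0 ord0 hy; have := inS_eabs_le ord0 hy; lia.
have no_zero g : (g \in family pos) = ~~ [exists j, g j == 0%N :> nat].
  apply/familyP/negP => [g_pos /existsP [j /eqP g0] | no0 j].
    by have := g_pos j; rewrite inE g0.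
  by rewrite inE lt0n; apply/negP => /eqP g0; apply: no0; apply/existsP; exists j; rewrite g0.
transitivity (\sum_(x | inS x) \sum_(g | consistent y x g) W g).
  by rewrite mulr_sumr; apply: eq_bigr => x hx; rewrite consistent_weight // !mulrA.
rewrite (exchange_big_dep predT) //=.
transitivity (\sum_g (W g - if g \in family pos then W g else 0)).
  apply: eq_bigr => g _; rewrite sum_consistent // no_zero.
  by case: ifP; rewrite ?subr0 ?subrr.
by rewrite sumrB -big_mkcond sum_prod_tgeom sum_prod_tgeom_gt0 // card_ord.
Qed.

End BalanceIdentity.

Section PositiveKernel.
Variables (R : realFieldType) (T : finType) (S : pred T) (P : T -> T -> R).
Hypothesis P_gt0 : forall x y, S x -> S y -> 0 < P x y.

Definition stationary (mu : T -> R) := forall y, S y -> mu y = \sum_(x | S x) mu x * P x y.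

Lemma stationary_ge0_eq0 (w : T -> R) z : stationary w -> (forall x, S x -> 0 <= w x) ->
  S z -> w z = 0 -> forall x, S x -> w x = 0.
Proof.
move=> w_stat w_ge0 Sz wz0 x Sx.
have w_P_ge0 i : S i -> 0 <= w i * P i z by move=> Si; rewrite mulr_ge0 ?w_ge0 ?ltW ?P_gt0.
have sum0 : \sum_(i | S i) w i * P i z = 0 by rewrite -w_stat.
have /eqP := psumr_eq0P w_P_ge0 sum0 Sx.
by rewrite mulf_eq0 (negbTE (lt0r_neq0 (P_gt0 Sx Sz))) orbF => /eqP.
Qed.

Lemma stationary_unique (nu mu : T -> R) : (forall x, S x -> 0 < nu x) ->
  \sum_(x | S x) nu x = 1 -> stationary nu ->
  \sum_(x | S x) mu x = 1 -> stationary mu -> forall x, S x -> mu x = nu x.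
Proof.
move=> nu_gt0 nu1 nu_stat mu1 mu_stat x Sx.
have [z Sz z_min] := arg_minP (fun i => mu i / nu i) Sx.
set c := mu z / nu z in z_min.
pose w i := mu i - c * nu i.
have w_stat : stationary w.
  move=> i Si; rewrite /w (mu_stat i Si) (nu_stat i Si) mulr_sumr -sumrB.
  by apply: eq_bigr => j _; ring.
have w_ge0 i : S i -> 0 <= w i.
  by move=> Si; rewrite subr_ge0 -ler_pdivlMr ?nu_gt0 ?z_min.
have wz : w z = 0 by rewrite /w /c divfK ?subrr // lt0r_neq0 ?nu_gt0.
have mu_eq i : S i -> mu i = c * nu i.
  move=> Si; apply/eqP; rewrite -subr_eq0; apply/eqP.
  exact: (stationary_ge0_eq0 w_stat w_ge0 Sz wz Si).
have c1 : c = 1 by rewrite -mu1 (eq_bigr _ mu_eq) -mulr_sumr nu1 mulr1.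
by rewrite mu_eq // c1 mul1r.
Qed.

End PositiveKernel.

Section WarehouseChain.
Variables (R : realFieldType) (s : R) (n k : nat).
Hypothesis s01 : 0 < s < 1.

Let s_gt0 : 0 < s. Proof. by case/andP: s01. Qed.
Let q_gt0 : 0 < 1 - s. Proof. by rewrite subr_gt0; case/andP: s01. Qed.
Let qk_lt1 : (1 - s) ^+ k.+1 < 1.
Proof. by rewrite exprn_ilt1 ?ltW // ltrBlDr ltrDl. Qed.

Lemma Ptrans_gt0 (x y : state n k.+1) : 0 < Ptrans s x y.
Proof.
have r_gt0 : 0 < (1 - s) / s by rewrite divr_gt0.
rewrite /Ptrans mulr_gt0 ?exprz_gt0 // mulr_gt0 ?exprn_gt0 //.
by rewrite divr_gt0 ?exprn_gt0 ?subr_gt0.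
Qed.

Lemma omega_gt0 (x : state n k.+1) : 0 < omega s x.
Proof. by rewrite exprn_gt0 ?divr_gt0. Qed.

Lemma sum_omega_gt0 (x : state n k.+1) :
  inS x -> 0 < \sum_(z : state n k.+1 | inS z) omega s z.
Proof.
move=> hx; rewrite (bigD1 x) //= ltr_pwDl ?omega_gt0 // sumr_ge0 // => z _.
by rewrite ltW ?omega_gt0.
Qed.

Lemma nu_gt0 (x : state n k.+1) : inS x -> 0 < nu s x.
Proof. by move=> hx; rewrite /nu divr_gt0 ?omega_gt0 ?(sum_omega_gt0 hx). Qed.

Lemma sum_nu (x : state n k.+1) : inS x -> \sum_(z : state n k.+1 | inS z) nu s z = 1.
Proof. by move=> hx; rewrite -mulr_suml mulfV // lt0r_neq0 ?(sum_omega_gt0 hx). Qed.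

Lemma nu_stationary : stationary (@inS n k.+1) (Ptrans s) (nu s).
Proof.
move=> y hy; have := balance_identity hy (lt0r_neq0 s_gt0).
set Z := \sum_(x | inS x) _ => balance.
have C_Z : s ^+ k.+1 / (1 - (1 - s) ^+ k.+1) * Z = 1.
  by rewrite mulrAC balance mulfV // subr_eq0 eq_sym lt_eqF.
rewrite -[LHS]mulr1 -C_Z mulrA mulr_sumr; apply: eq_bigr => x _.
by rewrite /nu /Ptrans /omega phi_failures -exprnP; ring.
Qed.

End WarehouseChain.

Theorem mainTheorem1 (R : realFieldType) (n k : nat) (s : R) :
  (1 <= k <= n)%N -> 0 < s < 1 ->
  (forall y : state n k, inS y ->
     nu s y = \sum_(x : state n k | inS x) nu s x * Ptrans s x y) /\
  (forall mu : state n k -> R,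
     (forall x, inS x -> 0 <= mu x) ->
     \sum_(x : state n k | inS x) mu x = 1 ->
     (forall y, inS y -> mu y = \sum_(x : state n k | inS x) mu x * Ptrans s x y) ->
     forall x, inS x -> mu x = nu s x).
Proof.
case: k => [|k] // _ s01; split; first exact: nu_stationary s01.
move=> mu _ mu1 mu_stat x hx.
apply: (stationary_unique (S := @inS n k.+1) (fun x y _ _ => Ptrans_gt0 s01 x y)) => //.
- exact: nu_gt0 s01.
- exact: (sum_nu s01 hx).
- exact: nu_stationary s01.
Qed.
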